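(* Let $\omega_0(n)=(n+1)/\pi$ and consider $\mathcal T$ on $\mathcal X_{\omega_0}$. For $n\ge1$ and $0\le r\le3^n-1$ define finite sets $P^{(n)}_{k,r}\subset\mathbf Q[\xi]$ of polynomials of degree one by $P^{(n)}_{0,r}=\{3^n\xi+r\}$ and, for $k\ge0$, \[P^{(n)}_{k+1,r}=\{2P;\ P\in P^{(n)}_{k,r}\}\cup\{(2P-1)/3;\ P\in P^{(n)}_{k,r},\ P(0)\equiv2\bmod 3\}.\] Then for every $n\ge1$, \[\|\mathcal T^n\|^2=\max_{0\le r\le3^n-1}\ \sum_{a\xi+b\in P^{(n)}_{n,r}}\frac{a}{3^n}.\]
   Context: $T\colon\mathbf Z_+\to\mathbf Z_+$ is the modified Collatz map: $T(n)=n/2$ for $n$ even, $T(n)=(3n+1)/2$ for $n$ odd. $\mathcal X_{\omega_0}$ is the Hilbert space of holomorphic functions $f(z)=\sum_{n\ge3}c_nz^n$ on the unit disk with $\|f\|^2=\sum_{n\ge3}\pi|c_n|^2/(n+1)<\infty$ (the Bergman space modulo $\mathrm{span}[1,z,z^2]$). $\mathcal T\sum_{n\ge3}c_nz^n=\sum_{j\ge3,\,T(j)\ge3}c_jz^{T(j)}$, a bounded operator on $\mathcal X_{\omega_0}$; $\|\cdot\|$ is its operator norm. *)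

From Stdlib Require Import Reals QArith Qreals List.
From Coquelicot Require Import Coquelicot.
Import ListNotations.
Open Scope R_scope.

Definition collatz (n : nat) : nat :=
  if Nat.even n then Nat.div n 2 else Nat.div (3 * n + 1) 2.

Definition omega0 (n : nat) : R := (INR n + 1) / PI.

(** An element f(z) = sum_{n>=3} c_n z^n of X_{omega_0} is represented by its
    Taylor coefficient sequence c : nat -> C. *)
Definition wterm (c : nat -> C) (n : nat) : R :=
  if (3 <=? n)%nat then (Cmod (c n)) ^ 2 / omega0 n else 0.

Definition inX (c : nat -> C) : Prop :=
  (forall n, (n < 3)%nat -> c n = RtoC 0) /\ ex_series (wterm c).

Definition normX (c : nat -> C) : R := sqrt (Series (wterm c)).

(** The coefficient of z^m (m >= 3) is the sum of c_j over j >= 3 with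
    T(j) = m; every such j satisfies j <= 2m, so the sum is over j in [0, 2m]. *)
Definition Tcoef (c : nat -> C) (m : nat) : C :=
  if (3 <=? m)%nat then
    sum_n (fun j => if ((3 <=? j)%nat && (collatz j =? m)%nat) then c j else RtoC 0)
          (2 * m)
  else RtoC 0.

Definition Tpow (n : nat) (c : nat -> C) : nat -> C := Nat.iter n Tcoef c.

Definition opnorm (n : nat) : Rbar :=
  Lub_Rbar (fun x => exists c, inX c /\ normX c <= 1 /\ x = normX (Tpow n c)).

(** Degree-one polynomials a xi + b in Q[xi], represented as (a, b),
    kept in reduced form (Qred) so that set operations are well defined. *)
Definition poly1 := (Q * Q)%type.

Definition cong2mod3 (b : Q) : bool :=
  let q := Qred b in (Pos.eqb (Qden q) 1 && Z.eqb (Z.modulo (Qnum q) 3) 2)%bool.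

Fixpoint dedupP (l : list poly1) : list poly1 :=
  match l with
  | [] => []
  | x :: l' =>
      if existsb (fun y => (Qeq_bool (fst x) (fst y) && Qeq_bool (snd x) (snd y))%bool) l'
      then dedupP l' else x :: dedupP l'
  end.

Definition Pstep (L : list poly1) : list poly1 :=
  dedupP (map (fun p => (Qred (2 * fst p), Qred (2 * snd p))) L
          ++ map (fun p => (Qred (2 * fst p / 3), Qred ((2 * snd p - 1) / 3)))
                 (filter (fun p => cong2mod3 (snd p)) L)).

Definition Pset (n k r : nat) : list poly1 :=
  Nat.iter k Pstep [(inject_Z (3 ^ Z.of_nat n)%Z, inject_Z (Z.of_nat r))].

Definition Ssum (n r : nat) : R :=
  fold_right (fun p acc => Q2R (fst p) / 3 ^ n + acc) 0 (Pset n n r).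

Definition maxS (n : nat) : R :=
  fold_right (fun r acc => Rmax (Ssum n r) acc) (Ssum n 0) (seq 0 (3 ^ n)).

(* The coefficient of z^m (m >= 3) in T^n f is the sum of the coefficients c_j over the n-th
   Collatz preimages j >= 3 of m. Writing m = 3^n xi + r with 0 <= r < 3^n, these preimages are
   the values at xi of the polynomials a xi + b of P^{(n)}_{n,r}, and each one satisfies
   3^n (j + 1) <= a (m + 1) <= 3^n (j + 2^n). Cauchy-Schwarz with the weights omega_0(j) thus
   bounds the contribution of z^m to ||T^n f||^2 by (sum a / 3^n) times the part of ||f||^2
   carried by the preimages of m; these parts are disjoint, so ||T^n||^2 <= max_r sum a / 3^n.
   Conversely, the equality case c_j ~ omega_0(j) on the preimages of a single m = 3^n xi + r
   gives ||T^n||^2 >= sum a / 3^n - 4^n / (m + 1), and xi -> oo closes the gap. *)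

From Stdlib Require Import Reals ZArith QArith Qreals Qcanon List Lia Lra.
From Coquelicot Require Import Coquelicot.
Import ListNotations.

Section SumList.
Context {G : AbelianMonoid} {A : Type}.

Definition sum_list (f : A -> G) (l : list A) : G :=
  fold_right (fun x acc => plus (f x) acc) zero l.

Lemma sum_list_cons (f : A -> G) a l : sum_list f (a :: l) = plus (f a) (sum_list f l).
Proof. reflexivity. Qed.

Lemma sum_list_app (f : A -> G) l1 l2 :
  sum_list f (l1 ++ l2) = plus (sum_list f l1) (sum_list f l2).
Proof.
  induction l1 as [|a l1 IH]; cbn [app]; [symmetry; apply plus_zero_l|].
  rewrite !sum_list_cons, IH. apply plus_assoc.
Qed.

Lemma sum_list_ext_in (f g : A -> G) l :
  (forall x, In x l -> f x = g x) -> sum_list f l = sum_list g l.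
Proof.
  induction l as [|a l IH]; intros H; [reflexivity|].
  rewrite !sum_list_cons, H, IH; auto with datatypes.
Qed.

Lemma sum_list_zero (f : A -> G) l : (forall x, In x l -> f x = zero) -> sum_list f l = zero.
Proof.
  induction l as [|a l IH]; intros H; [reflexivity|].
  rewrite sum_list_cons, H, IH, plus_zero_l; auto with datatypes.
Qed.

Lemma sum_list_plus (f g : A -> G) l :
  sum_list (fun x => plus (f x) (g x)) l = plus (sum_list f l) (sum_list g l).
Proof.
  induction l as [|a l IH]; [symmetry; apply plus_zero_l|].
  rewrite !sum_list_cons, IH, <- !plus_assoc. f_equal.
  rewrite !plus_assoc. f_equal. apply plus_comm.
Qed.

Lemma sum_list_filter (p : A -> bool) (f : A -> G) l :
  sum_list (fun x => if p x then f x else zero) l = sum_list f (filter p l).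
Proof.
  induction l as [|a l IH]; [reflexivity|].
  rewrite sum_list_cons, IH. cbn. destruct (p a); [reflexivity | apply plus_zero_l].
Qed.

End SumList.

Lemma sum_list_map {G : AbelianMonoid} {A B : Type} (f : B -> G) (g : A -> B) l :
  sum_list f (map g l) = sum_list (fun x => f (g x)) l.
Proof.
  induction l as [|a l IH]; [reflexivity|]. cbn [map]. now rewrite !sum_list_cons, IH.
Qed.

Lemma sum_list_flat_map {G : AbelianMonoid} {A B : Type} (f : A -> G) (h : B -> list A) l :
  sum_list f (flat_map h l) = sum_list (fun y => sum_list f (h y)) l.
Proof.
  induction l as [|b l IH]; [reflexivity|].
  cbn [flat_map]. now rewrite sum_list_app, IH.
Qed.

Section SumListR.
Context {A : Type}.

Lemma sum_list_le (f g : A -> R) l :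
  (forall x, In x l -> f x <= g x) -> sum_list f l <= sum_list g l.
Proof.
  induction l as [|a l IH]; intros H; [apply Rle_refl|].
  rewrite !sum_list_cons. apply Rplus_le_compat; auto with datatypes.
Qed.

Lemma sum_list_const (c : R) (l : list A) : sum_list (fun _ => c) l = INR (length l) * c.
Proof.
  induction l as [|a l IH]; [cbn; ring|].
  rewrite sum_list_cons, IH. cbn [length]. rewrite S_INR. cbn. ring.
Qed.

Lemma sum_list_nonneg (f : A -> R) l : (forall x, In x l -> 0 <= f x) -> 0 <= sum_list f l.
Proof.
  intros H. rewrite <- (Rmult_0_r (INR (length l))), <- sum_list_const.
  now apply sum_list_le.
Qed.

Lemma sum_list_scal (c : R) (f : A -> R) l : sum_list (fun x => c * f x) l = c * sum_list f l.
Proof.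
  induction l as [|a l IH]; [cbn; ring|].
  rewrite !sum_list_cons, IH. cbn. ring.
Qed.

Lemma sum_list_cauchy_schwarz (u w : A -> R) l : (forall x, In x l -> 0 < w x) ->
  sum_list u l ^ 2 <= sum_list w l * sum_list (fun x => u x ^ 2 / w x) l.
Proof.
  intros Hw.
  assert (HW : l = [] \/ 0 < sum_list w l).
  { destruct l as [|a l']; [now left | right]. rewrite sum_list_cons.
    assert (0 <= sum_list w l') by (apply sum_list_nonneg; intros x Hx; left; auto with datatypes).
    specialize (Hw a (or_introl eq_refl)).
    change (@plus R_AbelianMonoid) with Rplus. lra. }
  destruct HW as [-> | HW]; [cbn; lra|].
  set (U := sum_list u l) in *; set (W := sum_list w l) in *;
    set (B := sum_list (fun x => u x ^ 2 / w x) l).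
  set (t := U / W).
  (* [B - U^2 / W] is the value at [t] of the nonnegative quadratic [sum (u - t w)^2 / w] *)
  assert (Hsq : 0 <= sum_list (fun x => (u x - t * w x) ^ 2 / w x) l).
  { apply sum_list_nonneg. intros x Hx. specialize (Hw x Hx).
    apply Rdiv_le_0_compat; [apply pow2_ge_0 | exact Hw]. }
  rewrite (sum_list_ext_in _ (fun x => plus (plus (u x ^ 2 / w x) (- 2 * t * u x)) (t ^ 2 * w x)))
    in Hsq by (intros x Hx; specialize (Hw x Hx); cbn; field; lra).
  rewrite !sum_list_plus, !sum_list_scal in Hsq. fold U W B in Hsq.
  change (@plus R_AbelianMonoid) with Rplus in Hsq.
  replace (B + - 2 * t * U + t ^ 2 * W) with (B - U ^ 2 / W) in Hsq by (unfold t; field; lra).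
  replace (W * B) with (W * (B - U ^ 2 / W) + U ^ 2) by (field; lra).
  assert (0 <= W * (B - U ^ 2 / W)) by (apply Rmult_le_pos; lra).
  lra.
Qed.

End SumListR.

Lemma sum_n_indicator {G : AbelianMonoid} (f : nat -> G) x N :
  sum_n (fun j => if (j =? x)%nat then f j else zero) N = if (x <=? N)%nat then f x else zero.
Proof.
  induction N as [|N IH].
  - rewrite sum_O. destruct (Nat.eqb_spec 0 x) as [<- | Hx]; [reflexivity|].
    destruct x; [easy | reflexivity].
  - rewrite sum_Sn, IH.
    destruct (Nat.eqb_spec (S N) x), (Nat.leb_spec x N), (Nat.leb_spec x (S N));
      try lia; subst; auto using plus_zero_l, plus_zero_r.
Qed.

Lemma Cmod_sum_list {A : Type} (f : A -> C) l :
  Cmod (sum_list f l) <= sum_list (fun x => Cmod (f x)) l.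
Proof.
  induction l as [|a l IH]; cbn; [rewrite Cmod_0; lra|].
  eapply Rle_trans; [apply Cmod_triangle | apply Rplus_le_compat_l, IH].
Qed.

Lemma NoDup_flat_map {A B : Type} (h : A -> list B) l : NoDup l -> (forall x, NoDup (h x)) ->
  (forall x y z, In x l -> In y l -> In z (h x) -> In z (h y) -> x = y) ->
  NoDup (flat_map h l).
Proof.
  intros Hl Hh. induction Hl as [|x l Hx Hl IH]; intros Hdisj; [constructor|].
  cbn [flat_map]. apply NoDup_app; [apply Hh | apply IH; eauto with datatypes|].
  intros z Hz Hz'. apply in_flat_map in Hz' as [y [Hy Hzy]].
  rewrite (Hdisj x y z) in Hx; auto with datatypes.
Qed.

Lemma sum_n_sum_list {G : AbelianMonoid} (g : nat -> G) N : sum_n g N = sum_list g (seq 0 (S N)).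
Proof.
  induction N as [|N IH].
  - rewrite sum_O. symmetry. apply plus_zero_r.
  - rewrite sum_Sn, IH, (seq_S (S N)), sum_list_app. f_equal. symmetry. apply plus_zero_r.
Qed.

Lemma sum_n_indicator_list {G : AbelianMonoid} (g : nat -> G) l K :
  NoDup l -> (forall x, In x l -> (x <= K)%nat) ->
  sum_n (fun j => if in_dec Nat.eq_dec j l then g j else zero) K = sum_list g l.
Proof.
  intros Hl. induction Hl as [|x l Hx Hl IH]; intros HK.
  - apply sum_n_m_const_zero.
  - rewrite sum_list_cons, <- IH by auto with datatypes.
    rewrite (sum_n_ext _ (fun j => plus (if (j =? x)%nat then g j else zero)
      (if in_dec Nat.eq_dec j l then g j else zero))).
    + rewrite sum_n_plus, sum_n_indicator.
      now replace (x <=? K)%nat with true by (symmetry; apply Nat.leb_le, HK; left; reflexivity).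
    + intros j.
      destruct (in_dec Nat.eq_dec j (x :: l)), (in_dec Nat.eq_dec j l), (Nat.eqb_spec j x);
        subst; cbn [In] in *; try (exfalso; intuition congruence);
        symmetry; first [apply plus_zero_l | apply plus_zero_r].
Qed.

Lemma sum_list_le_sum_n (g : nat -> R) l K : NoDup l -> (forall x, In x l -> (x <= K)%nat) ->
  (forall j, 0 <= g j) -> sum_list g l <= sum_n g K.
Proof.
  intros Hl HK Hg. rewrite <- (sum_n_indicator_list g l K Hl HK).
  apply sum_n_m_le. intros j. destruct (in_dec Nat.eq_dec j l); [lra | apply Hg].
Qed.

Lemma is_series_finite_support (f : nat -> R) K :
  (forall k, (K < k)%nat -> f k = 0) -> is_series f (sum_n f K).
Proof.
  intros Hf. change (is_lim_seq (sum_n f) (sum_n f K)).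
  apply (is_lim_seq_ext_loc (fun _ => sum_n f K)); [|apply is_lim_seq_const].
  exists K. intros k Hk. induction Hk as [|k Hk IH]; [reflexivity|].
  rewrite sum_Sn, <- IH, Hf by lia. symmetry; apply Rplus_0_r.
Qed.

Lemma sum_n_le_Series (a : nat -> R) N :
  (forall j, 0 <= a j) -> ex_series a -> sum_n a N <= Series a.
Proof.
  intros Ha Hex. apply (is_lim_seq_incr_compare (sum_n a)).
  - apply Series_correct, Hex.
  - intros k. rewrite sum_Sn. change (@plus R_AbelianMonoid) with Rplus.
    specialize (Ha (S k)). lra.
Qed.

Lemma Series_le_of_sum_n (a : nat -> R) B : (forall j, 0 <= a j) -> (forall N, sum_n a N <= B) ->
  Series a <= B.
Proof.
  intros Ha HB. unfold Series.
  assert (Hup : Rbar_le (Lim_seq (sum_n a)) B).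
  { rewrite <- (Lim_seq_const B). apply Lim_seq_le_loc. now exists 0%nat. }
  assert (Hlo : Rbar_le 0 (Lim_seq (sum_n a))).
  { rewrite <- (Lim_seq_const 0). apply Lim_seq_le_loc. exists 0%nat. intros N _.
    rewrite sum_n_sum_list. apply sum_list_nonneg. auto. }
  destruct (Lim_seq (sum_n a)); cbn in *; [exact Hup | contradiction | contradiction].
Qed.

Lemma sum_list_RtoC {A : Type} (f : A -> R) l :
  sum_list (G := C_AbelianMonoid) (fun x => RtoC (f x)) l = RtoC (sum_list f l).
Proof.
  induction l as [|a l IH]; [reflexivity|]. rewrite !sum_list_cons, IH. symmetry. apply RtoC_plus.
Qed.

Lemma Lub_Rbar_sqrt (E : R -> Prop) M :
  (forall x, E x -> 0 <= x /\ x ^ 2 <= M) ->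
  (forall eps, 0 < eps -> exists x, E x /\ M - eps < x ^ 2) ->
  Lub_Rbar E = Finite (sqrt M).
Proof.
  intros Hub Happrox. apply is_lub_Rbar_unique. split.
  - intros x Hx. destruct (Hub x Hx) as [Hx0 Hx2]. cbn.
    rewrite <- (sqrt_pow2 x Hx0). apply sqrt_le_1_alt, Hx2.
  - intros [b | |] Hb; cbn; trivial.
    + destruct (Rle_lt_dec (sqrt M) b) as [Hle | Hlt]; [exact Hle | exfalso].
      destruct (Happrox 1 Rlt_0_1) as [y [Hy _]]. destruct (Hub y Hy) as [Hy0 Hy2].
      assert (Hb0 : 0 <= b) by (apply (Rle_trans _ y); [exact Hy0 | apply (Hb y Hy)]).
      assert (HM : b ^ 2 < M).
      { assert (sqrt M * sqrt M = M) by (apply sqrt_sqrt; nra). nra. }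
      destruct (Happrox (M - b ^ 2)) as [x [Hx Hx2]]; [lra|].
      assert (Hxb : x <= b) by apply (Hb x Hx). destruct (Hub x Hx) as [Hx0 _].
      assert (x ^ 2 <= b ^ 2) by (apply pow_incr; lra). lra.
    + destruct (Happrox 1 Rlt_0_1) as [x [Hx _]]. exact (Hb x Hx).
Qed.

Lemma fold_Rmax_ub {A : Type} (f : A -> R) x0 l x :
  In x l -> f x <= fold_right (fun y acc => Rmax (f y) acc) x0 l.
Proof.
  induction l as [|a l IH]; [intros []|]. intros [-> | Hx]; cbn [fold_right].
  - apply Rmax_l.
  - eapply Rle_trans; [apply IH, Hx | apply Rmax_r].
Qed.

Lemma fold_Rmax_cases {A : Type} (f : A -> R) x0 l :
  let M := fold_right (fun y acc => Rmax (f y) acc) x0 l in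
  M = x0 \/ exists x, In x l /\ M = f x.
Proof.
  induction l as [|a l IH]; cbn [fold_right]; [now left|].
  destruct (Rle_dec (f a) (fold_right (fun y acc => Rmax (f y) acc) x0 l)) as [Hle | Hlt].
  - rewrite Rmax_right by exact Hle. destruct IH as [-> | [x [Hx ->]]]; [now left|].
    right. exists x. auto with datatypes.
  - rewrite Rmax_left by lra. right. exists a. auto with datatypes.
Qed.

Ltac euclid x d :=
  pose proof (Nat.div_mod_eq x d); pose proof (Nat.mod_upper_bound x d ltac:(lia)).

Section CollatzPreimages.
Local Open Scope nat_scope.

Definition pre_even (m : nat) : nat := 2 * m.
(* Meaningful only when [has_pre_odd m]; otherwise a junk value of truncated arithmetic. *)
Definition pre_odd (m : nat) : nat := (2 * m - 1) / 3.
Definition has_pre_odd (m : nat) : bool := m mod 3 =? 2.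

Definition preimages_step (l : list nat) : list nat :=
  map pre_even l ++ map pre_odd (filter has_pre_odd l).

Definition preimages (k m : nat) : list nat := Nat.iter k preimages_step [m].

Lemma preimages_succ k m : preimages (S k) m = preimages_step (preimages k m).
Proof. reflexivity. Qed.

Lemma collatz_cases j :
  j mod 2 = 0 /\ 2 * collatz j = j \/ j mod 2 = 1 /\ 2 * collatz j = 3 * j + 1.
Proof.
  unfold collatz. destruct (Nat.Even_or_Odd j) as [[k ->] | [k ->]].
  - rewrite Nat.even_mul. cbn [Nat.even orb]. euclid (2 * k) 2. lia.
  - replace (Nat.even (2 * k + 1)) with false
      by (rewrite Nat.even_add, Nat.even_mul; reflexivity).
    euclid (3 * (2 * k + 1) + 1) 2. euclid (2 * k + 1) 2. lia.
Qed.

Lemma collatz_preimage_iff m j : 3 <= m ->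
  (3 <= j /\ collatz j = m <-> j = pre_even m \/ has_pre_odd m = true /\ j = pre_odd m).
Proof.
  intros Hm. unfold pre_even, pre_odd, has_pre_odd. rewrite Nat.eqb_eq.
  euclid m 3. euclid (2 * m - 1) 3.
  destruct (collatz_cases j) as [[Hj Hc] | [Hj Hc]]; euclid j 2; lia.
Qed.

Lemma collatz_preimage_eqb m j : 3 <= m ->
  (3 <=? j) && (collatz j =? m) = (j =? pre_even m) || has_pre_odd m && (j =? pre_odd m).
Proof.
  intros Hm. apply Bool.eq_true_iff_eq.
  rewrite Bool.andb_true_iff, Bool.orb_true_iff, Bool.andb_true_iff, Nat.leb_le, !Nat.eqb_eq.
  now apply collatz_preimage_iff.
Qed.

Lemma preimages_step_spec l j : In j (preimages_step l) <->
  exists x, In x l /\ (j = pre_even x \/ has_pre_odd x = true /\ j = pre_odd x).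
Proof.
  unfold preimages_step. rewrite in_app_iff, !in_map_iff. setoid_rewrite filter_In.
  firstorder.
Qed.

Lemma in_preimages k m j : 3 <= m -> In j (preimages k m) ->
  3 <= j /\ Nat.iter k collatz j = m.
Proof.
  intros Hm. revert j; induction k as [|k IH]; intros j Hj.
  - destruct Hj as [<- | []]. auto.
  - apply preimages_step_spec in Hj as [x [Hx Hjx]].
    destruct (IH x Hx) as [Hx3 Hxm].
    apply collatz_preimage_iff in Hjx as [Hj3 Hjc]; [|exact Hx3].
    rewrite Nat.iter_succ_r, Hjc. auto.
Qed.

Lemma preimages_le k m j : In j (preimages k m) -> j <= 2 ^ k * m.
Proof.
  revert j; induction k as [|k IH]; intros j Hj.
  - destruct Hj as [<- | []]. simpl. lia.
  - apply preimages_step_spec in Hj as [x [Hx [-> | [_ ->]]]];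
      specialize (IH x Hx); unfold pre_even, pre_odd; [|euclid (2 * x - 1) 3];
      rewrite Nat.pow_succ_r'; lia.
Qed.

Lemma preimages_in k m : In (2 ^ k * m) (preimages k m).
Proof.
  induction k as [|k IH]; [left; simpl; lia|].
  apply preimages_step_spec. exists (2 ^ k * m). split; [exact IH|].
  left. unfold pre_even. rewrite Nat.pow_succ_r'. lia.
Qed.

Lemma preimages_step_NoDup l : NoDup l -> NoDup (preimages_step l).
Proof.
  intros Hl. unfold preimages_step, pre_even, pre_odd, has_pre_odd. apply NoDup_app.
  - apply NoDup_map_NoDup_ForallPairs; [intros x y _ _; lia | exact Hl].
  - apply NoDup_map_NoDup_ForallPairs; [|apply NoDup_filter, Hl].
    intros x y Hx Hy. apply filter_In in Hx as [_ Hx], Hy as [_ Hy].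
    apply Nat.eqb_eq in Hx, Hy. euclid x 3. euclid y 3.
    euclid (2 * x - 1) 3. euclid (2 * y - 1) 3. lia.
  - intros j Hj Hj'. apply in_map_iff in Hj as [x [<- _]].
    apply in_map_iff in Hj' as [y [Hxy Hy]]. apply filter_In in Hy as [_ Hy].
    apply Nat.eqb_eq in Hy. euclid y 3. euclid (2 * y - 1) 3. euclid ((2 * y - 1) / 3) 2. lia.
Qed.

Lemma preimages_NoDup k m : NoDup (preimages k m).
Proof.
  induction k as [|k IH].
  - repeat constructor. intros [].
  - apply preimages_step_NoDup, IH.
Qed.

End CollatzPreimages.

Section AffinePreimages.
Local Open Scope nat_scope.

Definition aff_step (l : list (nat * nat)) : list (nat * nat) :=
  map (fun p => (2 * fst p, pre_even (snd p))) l
  ++ map (fun p => (2 * fst p / 3, pre_odd (snd p))) (filter (fun p => has_pre_odd (snd p)) l).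

(* A pair (a, b) stands for the polynomial a xi + b; [Pset_aff] identifies [aff_preimages n k r]
   with P^{(n)}_{k,r}. *)
Definition aff_preimages (n k r : nat) : list (nat * nat) := Nat.iter k aff_step [(3 ^ n, r)].

Lemma aff_preimages_succ n k r : aff_preimages n (S k) r = aff_step (aff_preimages n k r).
Proof. reflexivity. Qed.

Definition aff_eval (xi : nat) (p : nat * nat) : nat := fst p * xi + snd p.

(* With m = 3^n xi + r and j = a xi + b the inequalities read 3^n (j + 1) <= a (m + 1) <=
   3^n (j + 2^k); the divisibility makes a xi + b = b (mod 3) as long as k < n. *)
Definition aff_bounds (n r k : nat) (p : nat * nat) : Prop :=
  Nat.divide (3 ^ (n - k)) (fst p) /\
  3 ^ n * (snd p + 1) <= fst p * (r + 1) <= 3 ^ n * (snd p + 2 ^ k).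

Lemma aff_step_spec l p : In p (aff_step l) <-> exists q, In q l /\
  (p = (2 * fst q, pre_even (snd q)) \/
   has_pre_odd (snd q) = true /\ p = (2 * fst q / 3, pre_odd (snd q))).
Proof.
  unfold aff_step. rewrite in_app_iff, !in_map_iff. setoid_rewrite filter_In.
  firstorder.
Qed.

Lemma divide_pow3_mul3 n k a : k < n -> Nat.divide (3 ^ (n - k)) a ->
  exists t, a = 3 * t * 3 ^ (n - S k).
Proof.
  intros Hk [t Ht]. exists t.
  replace (n - k) with (S (n - S k)) in Ht by lia. rewrite Nat.pow_succ_r' in Ht. lia.
Qed.

Lemma aff_bounds_even n r k a b : k < n -> aff_bounds n r k (a, b) ->
  aff_bounds n r (S k) (2 * a, pre_even b).
Proof.
  unfold aff_bounds, pre_even; cbn [fst snd]. intros Hk [Ha Hb].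
  destruct (divide_pow3_mul3 n k a Hk Ha) as [t ->].
  split; [exists (6 * t); lia|]. rewrite Nat.pow_succ_r'. nia.
Qed.

Lemma aff_bounds_odd n r k a b : k < n -> has_pre_odd b = true ->
  aff_bounds n r k (a, b) -> aff_bounds n r (S k) (2 * a / 3, pre_odd b).
Proof.
  unfold aff_bounds, pre_odd, has_pre_odd; cbn [fst snd]. intros Hk Hb3 [Ha Hb].
  apply Nat.eqb_eq in Hb3. destruct (divide_pow3_mul3 n k a Hk Ha) as [t ->].
  replace (2 * (3 * t * 3 ^ (n - S k)) / 3) with (2 * t * 3 ^ (n - S k))
    by (apply Nat.div_unique with 0; lia).
  split; [exists (2 * t); lia|].
  euclid b 3. euclid (2 * b - 1) 3.
  assert (Hb' : 3 * ((2 * b - 1) / 3) + 1 = 2 * b) by lia.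
  rewrite Nat.pow_succ_r'. nia.
Qed.

Lemma aff_preimages_bounds n r k p : k <= n -> In p (aff_preimages n k r) -> aff_bounds n r k p.
Proof.
  revert p; induction k as [|k IH]; intros p Hk Hp.
  - destruct Hp as [<- | []]. unfold aff_bounds; cbn [fst snd].
    rewrite Nat.sub_0_r, Nat.pow_0_r. split; [exists 1; lia | lia].
  - apply aff_step_spec in Hp as [[a b] [Hq [-> | [Hb ->]]]]; cbn [fst snd] in *.
    + apply aff_bounds_even, IH; auto; lia.
    + apply aff_bounds_odd, IH; auto; lia.
Qed.

Lemma aff_preimages_eval n r xi k : k <= n ->
  preimages k (3 ^ n * xi + r) = map (aff_eval xi) (aff_preimages n k r).
Proof.
  induction k as [|k IH]; intros Hk; [reflexivity|].
  rewrite preimages_succ, aff_preimages_succ, IH by lia. unfold preimages_step, aff_step.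
  rewrite map_app, !map_map, filter_map_swap, map_map. f_equal.
  - apply map_ext. intros [a b]. unfold aff_eval, pre_even; cbn [fst snd]. lia.
  - assert (H3 : forall p, In p (aff_preimages n k r) -> exists t, fst p = 3 * t).
    { intros p Hp. destruct (aff_preimages_bounds n r k p ltac:(lia) Hp) as [Ha _].
      destruct (divide_pow3_mul3 n k (fst p) ltac:(lia) Ha) as [t ->]. eauto with arith. }
    rewrite (filter_ext_in _ (fun p => has_pre_odd (snd p))).
    + apply map_ext_in. intros [a b] Hp. apply filter_In in Hp as [Hp Hb].
      destruct (H3 _ Hp) as [t Ht]; cbn [fst snd] in *; subst a.
      unfold aff_eval, pre_odd, has_pre_odd in *; cbn [fst snd]. apply Nat.eqb_eq in Hb.
      euclid b 3. euclid (2 * b - 1) 3. euclid (2 * (3 * t * xi + b) - 1) 3.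
      replace (2 * (3 * t) / 3) with (2 * t) by (apply Nat.div_unique with 0; lia). nia.
    + intros [a b] Hp. destruct (H3 _ Hp) as [t Ht]; cbn [fst snd] in *; subst a.
      unfold aff_eval, has_pre_odd; cbn [fst snd].
      replace (3 * t * xi + b) with (b + t * xi * 3) by lia. now rewrite Nat.Div0.mod_add.
Qed.

Lemma aff_preimages_length n k r : length (aff_preimages n k r) <= 2 ^ k.
Proof.
  induction k as [|k IH]; [reflexivity|].
  rewrite aff_preimages_succ. unfold aff_step.
  rewrite length_app, !length_map, Nat.pow_succ_r'.
  pose proof (filter_length_le (fun p => has_pre_odd (snd p)) (aff_preimages n k r)). lia.
Qed.

Lemma aff_preimages_NoDup n k r : k <= n -> NoDup (aff_preimages n k r).
Proof.
  intros Hk. apply (NoDup_map_inv (aff_eval 0)).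
  rewrite <- aff_preimages_eval by exact Hk. apply preimages_NoDup.
Qed.

End AffinePreimages.

Definition poly1_of (p : nat * nat) : poly1 :=
  (inject_Z (Z.of_nat (fst p)), inject_Z (Z.of_nat (snd p))).

Lemma Qred_inject_Z q z : (q == inject_Z z)%Q -> Qred q = inject_Z z.
Proof.
  intros H. rewrite (Qred_complete _ _ H). apply Qred_identity, Z.gcd_1_r.
Qed.

Lemma cong2mod3_of_nat b : cong2mod3 (inject_Z (Z.of_nat b)) = has_pre_odd b.
Proof.
  unfold cong2mod3, has_pre_odd. rewrite (Qred_inject_Z _ (Z.of_nat b)) by reflexivity.
  cbn [Qden Qnum inject_Z Pos.eqb andb].
  change 3%Z with (Z.of_nat 3). rewrite <- Nat2Z.inj_mod.
  destruct (Nat.eqb_spec (b mod 3) 2) as [-> | Hb]; [reflexivity|].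
  apply Z.eqb_neq. lia.
Qed.

Lemma dedupP_map_poly1_of l : NoDup l -> dedupP (map poly1_of l) = map poly1_of l.
Proof.
  induction l as [|x l IH]; intros Hl; [reflexivity|].
  inversion Hl as [|? ? Hx Hl']; subst. cbn [map dedupP].
  destruct (existsb _ _) eqn:E; [exfalso | now rewrite IH].
  apply existsb_exists in E as [y [Hy Hxy]]. apply in_map_iff in Hy as [z [<- Hz]].
  apply andb_true_iff in Hxy as [H1 H2]. apply Qeq_bool_iff in H1, H2.
  apply inject_Z_injective, Nat2Z.inj in H1, H2.
  apply Hx. destruct x, z. cbn in H1, H2. now subst.
Qed.

Lemma Pset_aff n k r : (k <= n)%nat -> Pset n k r = map poly1_of (aff_preimages n k r).
Proof.
  induction k as [|k IH]; intros Hk.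
  - unfold poly1_of. cbn. now rewrite Nat2Z.inj_pow.
  - change (Pset n (S k) r) with (Pstep (Pset n k r)).
    rewrite IH, aff_preimages_succ by lia. unfold Pstep.
    rewrite <- (dedupP_map_poly1_of (aff_step _))
      by (rewrite <- aff_preimages_succ; apply aff_preimages_NoDup; lia).
    f_equal. unfold aff_step. rewrite map_app, !map_map, filter_map_swap, map_map. f_equal.
    + apply map_ext. intros [a b]. unfold poly1_of, pre_even; cbn [fst snd].
      f_equal; apply Qred_inject_Z; rewrite Nat2Z.inj_mul, inject_Z_mult; reflexivity.
    + rewrite (filter_ext _ (fun p => has_pre_odd (snd p)))
        by (intros p; apply cong2mod3_of_nat).
      apply map_ext_in. intros [a b] Hp. apply filter_In in Hp as [Hp Hb].
      destruct (aff_preimages_bounds n r k (a, b) ltac:(lia) Hp) as [Ha _]. cbn [fst snd] in *.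
      destruct (divide_pow3_mul3 n k a ltac:(lia) Ha) as [t ->].
      unfold poly1_of, pre_odd, has_pre_odd in *; cbn [fst snd]. apply Nat.eqb_eq in Hb.
      euclid b 3%nat. euclid (2 * b - 1)%nat 3%nat. euclid (2 * (3 * t * 3 ^ (n - S k)))%nat 3%nat.
      f_equal; apply Qred_inject_Z; unfold Qeq, Qdiv, Qminus;
        cbn [Qnum Qden Qmult Qinv Qplus Qopp inject_Z]; lia.
Qed.

Lemma Ssum_aff n r : Ssum n r = sum_list (fun p => INR (fst p) / 3 ^ n) (aff_preimages n n r).
Proof.
  change (Ssum n r) with (sum_list (fun p : poly1 => Q2R (fst p) / 3 ^ n) (Pset n n r)).
  rewrite Pset_aff, sum_list_map by lia. apply sum_list_ext_in. intros p _.
  unfold poly1_of, Q2R. cbn [fst Qnum Qden inject_Z].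
  rewrite INR_IZR_INZ, Rinv_1, Rmult_1_r. reflexivity.
Qed.

Lemma Ssum_nonneg n r : 0 <= Ssum n r.
Proof.
  rewrite Ssum_aff. apply sum_list_nonneg. intros p _.
  apply Rdiv_le_0_compat; [apply pos_INR | apply pow_lt; lra].
Qed.

Lemma maxS_ge n r : (r < 3 ^ n)%nat -> Ssum n r <= maxS n.
Proof. intros Hr. apply fold_Rmax_ub, in_seq. lia. Qed.

Lemma maxS_attained n : exists r, (r < 3 ^ n)%nat /\ maxS n = Ssum n r.
Proof.
  assert (H3n : (0 < 3 ^ n)%nat) by (apply Nat.neq_0_lt_0, Nat.pow_nonzero; lia).
  destruct (fold_Rmax_cases (Ssum n) (Ssum n 0) (seq 0 (3 ^ n))) as [H | [r [Hr H]]].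
  - exists 0%nat. auto.
  - apply in_seq in Hr. exists r. split; [lia | exact H].
Qed.

Lemma maxS_nonneg n : 0 <= maxS n.
Proof.
  destruct (maxS_attained n) as [r [_ ->]]. apply Ssum_nonneg.
Qed.

Lemma Tcoef_preimages c m : (3 <= m)%nat ->
  Tcoef c m = plus (c (pre_even m)) (if has_pre_odd m then c (pre_odd m) else zero).
Proof.
  intros Hm. unfold Tcoef. replace (3 <=? m)%nat with true by (symmetry; apply Nat.leb_le, Hm).
  assert (Hne : pre_even m <> pre_odd m)
    by (unfold pre_even, pre_odd; euclid (2 * m - 1)%nat 3%nat; lia).
  rewrite (sum_n_ext _ (fun j => plus (if (j =? pre_even m)%nat then c j else zero)
    (if (j =? pre_odd m)%nat then if has_pre_odd m then c j else zero else zero))).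
  - rewrite sum_n_plus, !sum_n_indicator.
    replace (pre_even m <=? 2 * m)%nat with true
      by (symmetry; apply Nat.leb_le; unfold pre_even; lia).
    replace (pre_odd m <=? 2 * m)%nat with true
      by (symmetry; apply Nat.leb_le; unfold pre_odd; euclid (2 * m - 1)%nat 3%nat; lia).
    reflexivity.
  - intros j. rewrite collatz_preimage_eqb by exact Hm.
    destruct (Nat.eqb_spec j (pre_even m)), (Nat.eqb_spec j (pre_odd m)), (has_pre_odd m);
      cbn [orb andb]; try congruence; auto using plus_zero_l, plus_zero_r.
Qed.

Lemma Tpow_preimages k c m : (3 <= m)%nat -> Tpow k c m = sum_list c (preimages k m).
Proof.
  intros Hm. revert c. induction k as [|k IH]; intros c.
  - symmetry. apply plus_zero_r.
  - unfold Tpow. rewrite Nat.iter_succ_r. fold (Tpow k (Tcoef c)). rewrite IH.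
    rewrite (sum_list_ext_in _
      (fun x => plus (c (pre_even x)) (if has_pre_odd x then c (pre_odd x) else zero)))
      by (intros x Hx; apply Tcoef_preimages, (in_preimages k m x Hm Hx)).
    rewrite sum_list_plus, sum_list_filter, preimages_succ. unfold preimages_step.
    now rewrite sum_list_app, !sum_list_map.
Qed.

Lemma aff_preimages_ratio n r xi p : In p (aff_preimages n n r) ->
  INR (aff_eval xi p) + 1 <= (INR (3 ^ n * xi + r) + 1) * (INR (fst p) / 3 ^ n) <=
  INR (aff_eval xi p) + 1 + 2 ^ n.
Proof.
  intros Hp. destruct (aff_preimages_bounds n r n p (le_n n) Hp) as [_ [Hlo Hhi]].
  unfold aff_eval. set (a := fst p) in *; set (b := snd p) in *.
  assert (Hl : (3 ^ n * (a * xi + b + 1) <= a * (3 ^ n * xi + r + 1))%nat) by nia.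
  assert (Hh : (a * (3 ^ n * xi + r + 1) <= 3 ^ n * (a * xi + b + 1) + 3 ^ n * 2 ^ n)%nat) by nia.
  apply le_INR in Hl, Hh.
  rewrite !mult_INR, !plus_INR, !mult_INR, !pow_INR in Hl.
  rewrite !plus_INR, !mult_INR, !plus_INR, !mult_INR, !pow_INR in Hh.
  rewrite !plus_INR, !mult_INR, !pow_INR.
  replace (INR 3) with 3 in * by (cbn; ring). replace (INR 2) with 2 in * by (cbn; ring).
  change (INR 1) with 1 in Hl, Hh.
  assert (H3 : 0 < 3 ^ n) by (apply pow_lt; lra).
  replace ((3 ^ n * INR xi + INR r + 1) * (INR a / 3 ^ n))
    with (INR a * (3 ^ n * INR xi + INR r + 1) / 3 ^ n) by (field; lra).
  split; [apply Rle_div_r | apply Rle_div_l]; lra.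
Qed.

Lemma preimages_weight_le n m :
  sum_list (fun j => INR j + 1) (preimages n m) <= (INR m + 1) * Ssum n (m mod 3 ^ n).
Proof.
  set (r := (m mod 3 ^ n)%nat). set (xi := (m / 3 ^ n)%nat).
  assert (Hm : m = (3 ^ n * xi + r)%nat) by apply Nat.div_mod_eq.
  rewrite Hm, aff_preimages_eval, sum_list_map, Ssum_aff, <- sum_list_scal by lia.
  apply sum_list_le. intros p Hp. apply (aff_preimages_ratio n r xi p Hp).
Qed.

Lemma preimages_weight_ge n r xi :
  (INR (3 ^ n * xi + r) + 1) * Ssum n r <=
  sum_list (fun j => INR j + 1) (preimages n (3 ^ n * xi + r)) + 2 ^ n * 2 ^ n.
Proof.
  rewrite aff_preimages_eval, sum_list_map, Ssum_aff, <- sum_list_scal by lia.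
  apply Rle_trans
    with (sum_list (fun p => plus (INR (aff_eval xi p) + 1) (2 ^ n)) (aff_preimages n n r)).
  - apply sum_list_le. intros p Hp. apply (aff_preimages_ratio n r xi p Hp).
  - rewrite sum_list_plus, sum_list_const. change (@plus R_AbelianMonoid) with Rplus.
    apply Rplus_le_compat_l, Rmult_le_compat_r; [apply pow_le; lra|].
    replace (2 ^ n) with (INR (2 ^ n)) by (rewrite pow_INR; f_equal; cbn; ring).
    apply le_INR, aff_preimages_length.
Qed.

Lemma omega0_pos j : 0 < omega0 j.
Proof.
  unfold omega0. apply Rdiv_lt_0_compat; [pose proof (pos_INR j); lra | apply PI_RGT_0].
Qed.

Lemma wterm_nonneg c j : 0 <= wterm c j.
Proof.
  unfold wterm. destruct (3 <=? j)%nat; [|lra].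
  apply Rdiv_le_0_compat; [apply pow2_ge_0 | apply omega0_pos].
Qed.

Lemma sum_list_omega0_ratio l m :
  sum_list omega0 l / omega0 m = sum_list (fun j => INR j + 1) l / (INR m + 1).
Proof.
  rewrite (sum_list_ext_in omega0 (fun j => / PI * (INR j + 1))) by (intros j _; apply Rmult_comm).
  rewrite sum_list_scal. unfold omega0. field.
  split; [pose proof (pos_INR m); lra | apply PI_neq0].
Qed.

Lemma wterm_Tpow_le n c m : (3 <= m)%nat ->
  wterm (Tpow n c) m <= maxS n * sum_list (wterm c) (preimages n m).
Proof.
  intros Hm. set (l := preimages n m).
  assert (Hw : sum_list (wterm c) l = sum_list (fun j => Cmod (c j) ^ 2 / omega0 j) l).
  { apply sum_list_ext_in. intros j Hj. unfold wterm.
    now replace (3 <=? j)%nat with true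
      by (symmetry; apply Nat.leb_le, (in_preimages n m j Hm Hj)). }
  assert (Hratio : sum_list omega0 l / omega0 m <= maxS n).
  { assert (Hr : (m mod 3 ^ n < 3 ^ n)%nat) by (apply Nat.mod_upper_bound, Nat.pow_nonzero; lia).
    rewrite sum_list_omega0_ratio. apply Rle_div_l; [pose proof (pos_INR m); lra|].
    eapply Rle_trans; [apply preimages_weight_le|]. rewrite Rmult_comm.
    apply Rmult_le_compat_r; [pose proof (pos_INR m); lra | apply maxS_ge, Hr]. }
  assert (Hcs : Cmod (sum_list c l) ^ 2 <= sum_list omega0 l * sum_list (wterm c) l).
  { rewrite Hw. eapply Rle_trans;
      [|exact (sum_list_cauchy_schwarz (fun j => Cmod (c j)) omega0 l (fun j _ => omega0_pos j))].
    apply pow_incr. split; [apply Cmod_ge_0 | apply Cmod_sum_list]. }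
  unfold wterm at 1. replace (3 <=? m)%nat with true by (symmetry; apply Nat.leb_le, Hm).
  rewrite Tpow_preimages by exact Hm. fold l.
  apply Rle_trans with (sum_list omega0 l / omega0 m * sum_list (wterm c) l).
  - replace (sum_list omega0 l / omega0 m * sum_list (wterm c) l)
      with (sum_list omega0 l * sum_list (wterm c) l / omega0 m)
      by (field; apply Rgt_not_eq, omega0_pos).
    apply Rmult_le_compat_r; [left; apply Rinv_0_lt_compat, omega0_pos | exact Hcs].
  - apply Rmult_le_compat_r; [apply sum_list_nonneg; intros j _; apply wterm_nonneg | exact Hratio].
Qed.

Lemma sum_n_wterm_Tpow_le n c N :
  sum_n (wterm (Tpow n c)) N <= maxS n * sum_n (wterm c) (2 ^ n * N).
Proof.
  set (L := filter (Nat.leb 3) (seq 0 (S N))).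
  assert (HL : forall m, In m L -> (3 <= m <= N)%nat).
  { intros m Hm. apply filter_In in Hm as [Hm H3].
    apply in_seq in Hm. apply Nat.leb_le in H3. lia. }
  rewrite sum_n_sum_list,
    (sum_list_ext_in _ (fun m => if Nat.leb 3 m then wterm (Tpow n c) m else zero))
    by (intros m _; unfold wterm; now destruct (Nat.leb 3 m)).
  rewrite sum_list_filter. fold L.
  apply Rle_trans with (sum_list (fun m => maxS n * sum_list (wterm c) (preimages n m)) L).
  { apply sum_list_le. intros m Hm. apply wterm_Tpow_le, HL, Hm. }
  rewrite sum_list_scal, <- sum_list_flat_map.
  apply Rmult_le_compat_l; [apply maxS_nonneg|]. apply sum_list_le_sum_n.
  - apply NoDup_flat_map; [apply NoDup_filter, seq_NoDup | apply preimages_NoDup|].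
    intros m m' j Hm Hm' Hj Hj'.
    destruct (in_preimages n m j (proj1 (HL m Hm)) Hj) as [_ <-].
    destruct (in_preimages n m' j (proj1 (HL m' Hm')) Hj') as [_ <-]. reflexivity.
  - intros j Hj. apply in_flat_map in Hj as [m [Hm Hj]].
    apply preimages_le in Hj. specialize (HL m Hm). nia.
  - apply wterm_nonneg.
Qed.

Lemma Series_wterm_Tpow_le n c : inX c ->
  Series (wterm (Tpow n c)) <= maxS n * Series (wterm c).
Proof.
  intros [_ Hc]. apply Series_le_of_sum_n; [apply wterm_nonneg|]. intros N.
  eapply Rle_trans; [apply sum_n_wterm_Tpow_le|].
  apply Rmult_le_compat_l; [apply maxS_nonneg|].
  apply sum_n_le_Series; [apply wterm_nonneg | exact Hc].
Qed.

Lemma normX_Tpow_le n c : inX c -> normX (Tpow n c) <= sqrt (maxS n) * normX c.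
Proof.
  intros Hc. unfold normX. rewrite <- sqrt_mult_alt by apply maxS_nonneg.
  apply sqrt_le_1_alt, Series_wterm_Tpow_le, Hc.
Qed.

(* The equality case of the Cauchy-Schwarz step in [wterm_Tpow_le]: c_j proportional to
   omega_0(j) on the preimages of a single point. *)
Definition extremal_vector (l : list nat) (s : R) (j : nat) : C :=
  if in_dec Nat.eq_dec j l then RtoC (/ s * (INR j + 1)) else RtoC 0.

Lemma wterm_extremal_vector l s j : s <> 0 -> (forall x, In x l -> (3 <= x)%nat) ->
  wterm (extremal_vector l s) j = if in_dec Nat.eq_dec j l then PI / s ^ 2 * (INR j + 1) else 0.
Proof.
  intros Hs Hl. unfold wterm, extremal_vector. destruct (in_dec Nat.eq_dec j l) as [Hj | Hj].
  - replace (3 <=? j)%nat with true by (symmetry; apply Nat.leb_le, Hl, Hj).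
    rewrite Cmod_R, pow2_abs. unfold omega0. field.
    repeat split; [exact Hs | apply PI_neq0 | pose proof (pos_INR j); lra].
  - rewrite Cmod_R, Rabs_R0. destruct (3 <=? j)%nat; [unfold Rdiv; ring | reflexivity].
Qed.

Lemma is_series_wterm_extremal_vector l s K : s <> 0 -> NoDup l ->
  (forall x, In x l -> (3 <= x <= K)%nat) ->
  is_series (wterm (extremal_vector l s)) (PI / s ^ 2 * sum_list (fun j => INR j + 1) l).
Proof.
  intros Hs Hl HK.
  apply (is_series_ext (fun j => if in_dec Nat.eq_dec j l then PI / s ^ 2 * (INR j + 1) else 0)).
  { intros j. symmetry. apply wterm_extremal_vector; [exact Hs | apply HK]. }
  rewrite <- sum_list_scal, <- (sum_n_indicator_list _ l K Hl) by apply HK.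
  apply is_series_finite_support. intros k Hk.
  destruct (in_dec Nat.eq_dec k l) as [Hkl | _]; [specialize (HK k Hkl); lia | reflexivity].
Qed.

Section ExtremalVector.
Variables (n m : nat) (s : R).
Hypothesis Hm : (3 <= m)%nat.

Let D := sum_list (fun j => INR j + 1) (preimages n m).
Let v := extremal_vector (preimages n m) s.

Lemma Tpow_extremal_vector m' : (3 <= m')%nat ->
  Tpow n v m' = if (m' =? m)%nat then RtoC (/ s * D) else RtoC 0.
Proof.
  intros Hm'. rewrite Tpow_preimages by exact Hm'. unfold v, extremal_vector.
  destruct (Nat.eqb_spec m' m) as [-> | Hne].
  - rewrite (sum_list_ext_in _ (fun j => RtoC (/ s * (INR j + 1)))).
    + now rewrite sum_list_RtoC, sum_list_scal.
    + intros j Hj. now destruct (in_dec Nat.eq_dec j (preimages n m)).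
  - transitivity (@zero C_AbelianMonoid); [|reflexivity].
    apply sum_list_zero. intros j Hj.
    destruct (in_dec Nat.eq_dec j (preimages n m)) as [Hj' | _]; [exfalso | reflexivity].
    apply Hne.
    now rewrite <- (proj2 (in_preimages n m' j Hm' Hj)), (proj2 (in_preimages n m j Hm Hj')).
Qed.

Lemma is_series_wterm_Tpow_extremal_vector :
  is_series (wterm (Tpow n v)) ((/ s * D) ^ 2 / omega0 m).
Proof.
  apply (is_series_ext (fun m' => if (m' =? m)%nat then (/ s * D) ^ 2 / omega0 m else 0)).
  { intros m'. unfold wterm. destruct (Nat.leb_spec 3 m').
    - rewrite Tpow_extremal_vector by exact H.
      destruct (Nat.eqb_spec m' m) as [-> | _]; [now rewrite Cmod_R, pow2_abs|].
      rewrite Cmod_R, Rabs_R0, pow_i by lia. symmetry. apply Rdiv_0_l.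
    - destruct (Nat.eqb_spec m' m); [lia | reflexivity]. }
  set (g := fun m' => if (m' =? m)%nat then (/ s * D) ^ 2 / omega0 m else 0).
  assert (Hg : is_series g (sum_n g m)).
  { apply is_series_finite_support. intros k Hk. unfold g.
    destruct (Nat.eqb_spec k m); [lia | reflexivity]. }
  replace (sum_n g m) with ((/ s * D) ^ 2 / omega0 m) in Hg; [exact Hg|].
  symmetry. etransitivity; [apply (sum_n_indicator (fun _ => (/ s * D) ^ 2 / omega0 m)) |].
  now rewrite Nat.leb_refl.
Qed.

End ExtremalVector.

Lemma extremal_vector_norms n m : (3 <= m)%nat ->
  exists c, inX c /\ normX c = 1 /\
    normX (Tpow n c) = sqrt (sum_list (fun j => INR j + 1) (preimages n m) / (INR m + 1)).
Proof.
  intros Hm. set (l := preimages n m). set (D := sum_list (fun j => INR j + 1) l).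
  assert (Hl : forall j, In j l -> (3 <= j <= 2 ^ n * m)%nat).
  { intros j Hj. split; [apply (in_preimages n m j Hm Hj) | apply preimages_le, Hj]. }
  assert (HD : 0 < D).
  { assert (Hin := preimages_in n m). fold l in Hin. unfold D.
    destruct l as [|x l']; [destruct Hin|]. rewrite sum_list_cons.
    assert (0 <= sum_list (fun j => INR j + 1) l')
      by (apply sum_list_nonneg; intros j _; pose proof (pos_INR j); lra).
    pose proof (pos_INR x). change (@plus R_AbelianMonoid) with Rplus. lra. }
  set (s := sqrt (PI * D)).
  assert (Hs2 : s ^ 2 = PI * D) by (apply pow2_sqrt; pose proof PI_RGT_0; nra).
  assert (Hs : s <> 0) by (intros Hs; rewrite Hs in Hs2; pose proof PI_RGT_0; nra).
  assert (Hm1 : INR m + 1 <> 0) by (pose proof (pos_INR m); lra).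
  assert (Hv := is_series_wterm_extremal_vector l s (2 ^ n * m) Hs (preimages_NoDup n m) Hl).
  assert (HTv := is_series_wterm_Tpow_extremal_vector n m s Hm). fold l D in HTv.
  exists (extremal_vector l s). split; [split|split].
  - intros k Hk. unfold extremal_vector.
    destruct (in_dec Nat.eq_dec k l) as [Hkl | _]; [specialize (Hl k Hkl); lia | reflexivity].
  - eexists. exact Hv.
  - unfold normX. rewrite (is_series_unique _ _ Hv). fold D. rewrite Hs2, <- sqrt_1. f_equal.
    field. split; [lra | apply PI_neq0].
  - unfold normX. rewrite (is_series_unique _ _ HTv). f_equal. fold l D.
    unfold omega0. rewrite Rpow_mult_distr, pow_inv, Hs2. field.
    repeat split; first [exact Hm1 | apply PI_neq0 | lra].
Qed.

Lemma normX_Tpow_sqr_le n c : inX c -> normX c <= 1 -> normX (Tpow n c) ^ 2 <= maxS n.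
Proof.
  intros Hc H1. assert (HT := normX_Tpow_le n c Hc).
  assert (HM := sqrt_pos (maxS n)). assert (HT0 := sqrt_pos (Series (wterm (Tpow n c)))).
  rewrite <- (pow2_sqrt (maxS n)) by apply maxS_nonneg.
  apply pow_incr. split; [exact HT0|]. fold (normX (Tpow n c)).
  eapply Rle_trans; [exact HT|]. rewrite <- (Rmult_1_r (sqrt (maxS n))) at 2.
  apply Rmult_le_compat_l; assumption.
Qed.

Lemma normX_Tpow_sqr_approx n eps : 0 < eps ->
  exists c, inX c /\ normX c <= 1 /\ maxS n - eps < normX (Tpow n c) ^ 2.
Proof.
  intros Heps. destruct (maxS_attained n) as [r [_ Hr]].
  destruct (INR_archimed eps (2 ^ n * 2 ^ n) Heps) as [k Hk].
  set (m := (3 ^ n * (k + 3) + r)%nat).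
  assert (H3n := Nat.pow_nonzero 3 n ltac:(lia)).
  assert (Hm : (3 <= m)%nat) by (unfold m; nia).
  assert (Hkm : INR k <= INR m) by (apply le_INR; unfold m; nia).
  destruct (extremal_vector_norms n m Hm) as [c [Hc [H1 HT]]].
  exists c. split; [exact Hc | split; [lra|]].
  assert (Hw := preimages_weight_ge n r (k + 3)). fold m in Hw. rewrite <- Hr in Hw.
  set (D := sum_list (fun j => INR j + 1) (preimages n m)) in *.
  assert (HD : 0 <= D) by (apply sum_list_nonneg; intros j _; pose proof (pos_INR j); lra).
  assert (Hm1 : 0 < INR m + 1) by (pose proof (pos_INR m); lra).
  rewrite HT, pow2_sqrt by (apply Rdiv_le_0_compat; lra).
  apply Rlt_div_r; [exact Hm1|]. nra.
Qed.

Theorem proposition4p2 (n : nat) (hn : (1 <= n)%nat) :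
  Rbar_mult (opnorm n) (opnorm n) = Finite (maxS n).
Proof.
  assert (Hnorm : opnorm n = Finite (sqrt (maxS n))).
  { apply Lub_Rbar_sqrt.
    - intros x [c [Hc [H1 ->]]]. split; [apply sqrt_pos | exact (normX_Tpow_sqr_le n c Hc H1)].
    - intros eps Heps. destruct (normX_Tpow_sqr_approx n eps Heps) as [c [Hc [H1 H2]]].
      exists (normX (Tpow n c)). split; [exists c; auto | exact H2]. }
  rewrite Hnorm. cbn. f_equal. apply sqrt_sqrt, maxS_nonneg.
Qed.
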